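(* Let $x$ be a half-integer square point with support graph $G_x$, let $H$ be a Hamiltonian cycle of $G_x$ containing all 1-edges of $x$ and two opposite half-edges from each half-square, and let $G=(V,E)$ be the 4-regular graph obtained from $G_x$ by replacing each path of 1-edges by a single 1-edge and contracting each half-square into a vertex. Let $\alpha>0$. If $P(G,\alpha)$ holds, then the vector $r^{\alpha,x}$ can be written as a convex combination of 2-edge-connected multigraphs of $G_x$.
   Context: $\mathrm{LP}(G)$ is the set of $x\in\mathbb{R}^E$ with $0\le x\le2$ and $x(\delta(S))\ge2$ for all $\emptyset\subsetneq S\subsetneq V$. The support graph $G_x$ has edge set $\{e:x_e>0\}$; 1-edges have $x_e=1$, half-edges $x_e=\frac12$. A half-integer Boyd-Carr point is a point $x\in\mathrm{LP}(G)$ with entries in $\{0,\frac12,1\}$ such that $G_x$ is cubic and 3-edge-connected, exactly one 1-edge is incident to each vertex, and the half-edges form vertex-disjoint 4-cycles (half-squares); a half-integer square point is obtained from such a point by replacing each 1-edge by a path of 1-edges of arbitrary length. Let $A$ be the set of 1-edges of $G_x$, $B$ the half-edges in $H$, and $C$ the half-edges not in $H$. For $\alpha>0$, $r^{\alpha,x}\in\mathbb{R}^{E(G_x)}$ has $r^{\alpha,x}_e=1+\alpha$ for $e\in A$, $r^{\alpha,x}_e=\frac12$ for $e\in B$, and $r^{\alpha,x}_e=1-\alpha$ for $e\in C$. $P(G,\alpha)$ holds if the everywhere $\alpha$ vector for $G$ (all entries $\alpha$) can be written as $\sum_{i=1}^k\lambda_i\chi^{M_i}$ with $\lambda_i\ge0$,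 $\sum_i\lambda_i=1$, where each $M_i$ is a matching of $G$ such that $(V,E\setminus M_i)$ is 2-vertex-connected. A 2-edge-connected multigraph of $G_x$ is a multiset of edges of $G_x$ forming a spanning 2-edge-connected multigraph; its incidence vector counts copies of each edge, and ''written as a convex combination'' means equal to a convex combination of such incidence vectors. *)

From HB Require Import structures.
From mathcomp Require Import all_boot all_order all_algebra.
From mathcomp Require Import reals.

Set Implicit Arguments.
Unset Strict Implicit.
Unset Printing Implicit Defensive.

Import Order.TTheory GRing.Theory Num.Theory.
Local Open Scope ring_scope.

(* Finite multigraphs: a vertex type V, an edge type E and an endpoint  *)
(* map [ends : E -> V * V] (parallel edges allowed; a loop e has        *)
(* (ends e).1 = (ends e).2).                                            *)
Section Multigraph.
Variables (V E : finType) (ends : E -> V * V).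

Definition incident (e : E) (v : V) : bool :=
  ((ends e).1 == v) || ((ends e).2 == v).

Definition delta (S : {set V}) : {set E} :=
  [set e | ((ends e).1 \in S) != ((ends e).2 \in S)].

Definition edge_connected (k : nat) : Prop :=
  forall S : {set V}, S != set0 -> S != setT -> (k <= #|delta S|)%N.

Definition inLP {R : realType} (x : E -> R) : Prop :=
  (forall e, 0 <= x e <= 2) /\
  (forall S : {set V}, S != set0 -> S != setT -> 2 <= \sum_(e in delta S) x e).

Definition adj_in (Es : {set E}) (W : {set V}) : rel V :=
  fun u v => [&& u \in W, v \in W &
    [exists e in Es, (((ends e).1 == u) && ((ends e).2 == v))
                  || (((ends e).1 == v) && ((ends e).2 == u))]].

Definition connected_in (Es : {set E}) (W : {set V}) : Prop :=
  forall u v, u \in W -> v \in W -> connect (adj_in Es W) u v.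

(* (V, Es) is 2-vertex-connected (Diestel): more than 2 vertices, and
   (V, Es) - X is connected for every vertex set X with |X| < 2. *)
Definition two_vertex_connected (Es : {set E}) : Prop :=
  (2 < #|V|)%N /\ connected_in Es setT /\
  (forall v : V, connected_in Es (setT :\ v)).

Definition matching (M : {set E}) : Prop :=
  (forall e, e \in M -> (ends e).1 != (ends e).2) /\
  (forall e f v, e \in M -> f \in M -> e != f -> incident e v -> ~~ incident f v).

Definition deg_in (Es : {set E}) (v : V) : nat := #|[set e in Es | incident e v]|.

Definition hamiltonian_cycle (Hc : {set E}) : Prop :=
  (forall v, deg_in Hc v = 2%N) /\ connected_in Hc setT.

(* a multiset y of edges (y e = number of copies of e) forms a spanning
   2-edge-connected multigraph: every cut contains at least two copies *)
Definition two_ecm (y : E -> nat) : Prop :=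
  forall S : {set V}, S != set0 -> S != setT -> (2 <= \sum_(e in delta S) y e)%N.

(* P(G, alpha): the everywhere-alpha vector is a convex combination of
   incidence vectors of matchings M_i with (V, E \ M_i) 2-vertex-connected *)
Definition P_prop {R : realType} (alpha : R) : Prop :=
  exists (k : nat) (lam : 'I_k -> R) (M : 'I_k -> {set E}),
    (forall i, 0 <= lam i) /\ \sum_(i < k) lam i = 1 /\
    (forall i, matching (M i) /\ two_vertex_connected (~: M i)) /\
    (forall e, alpha = \sum_(i < k) lam i * (e \in M i)%:R).

Definition convex_comb_2ecm {R : realType} (r : E -> R) : Prop :=
  exists (k : nat) (lam : 'I_k -> R) (y : 'I_k -> E -> nat),
    (forall i, 0 <= lam i) /\ \sum_(i < k) lam i = 1 /\
    (forall i, two_ecm (y i)) /\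
    (forall e, r e = \sum_(i < k) lam i * (y i e)%:R).

End Multigraph.

(* Half-integer square points (up to isomorphism).                      *)
(* Q : the half-squares; half-square q has the four vertices (q,i),     *)
(*     i : 'I_4, in cyclic order, with half-edges (q,i)--(q,i+1).       *)
(* F : the 1-edges of the underlying Boyd-Carr point; 1-edge f joins    *)
(*     the square vertices e1 f and e2 f.                               *)
(* In the half-integer square point, 1-edge f is replaced by a path of  *)
(* (lenm1 f).+1 1-edges, with lenm1 f new internal vertices.            *)
Section SquarePoint.
Variables (Q F : finType) (e1 e2 : F -> Q * 'I_4) (lenm1 : F -> nat).

Definition bc_vert := (Q * 'I_4)%type.
Definition bc_edge := ((Q * 'I_4) + F)%type.

Definition bc_ends (e : bc_edge) : bc_vert * bc_vert :=
  match e with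
  | inl (q, i) => ((q, i), (q, ordS i))
  | inr f => (e1 f, e2 f)
  end.

Definition bc_x {R : realType} (e : bc_edge) : R :=
  match e with inl _ => 1 / 2 | inr _ => 1 end.

(* exactly one 1-edge at each vertex: (f,side) |-> endpoint is a bijection *)
Definition one_edge_perfect : Prop :=
  bijective (fun p : F * bool => if p.2 then e1 p.1 else e2 p.1).

(* half-integer Boyd-Carr point (the support is cubic, each vertex has exactly
   one 1-edge and the half-edges form vertex-disjoint 4-cycles by construction) *)
Definition boyd_carr_point (R : realType) : Prop :=
  [/\ one_edge_perfect, edge_connected bc_ends 3 & inLP bc_ends (@bc_x R)].

Definition sq_vert := ((Q * 'I_4) + {f : F & 'I_(lenm1 f)})%type.
Definition sq_edge := ((Q * 'I_4) + {f : F & 'I_(lenm1 f).+1})%type.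

(* k-th vertex (0 <= k <= lenm1 f + 1) of the path replacing f *)
Definition pathv (f : F) (k : nat) : sq_vert :=
  if k == 0%N then inl (e1 f) else
  match (insub k.-1 : option 'I_(lenm1 f)) with
  | Some j => inr (Tagged (fun g => 'I_(lenm1 g)) j)
  | None => inl (e2 f)
  end.

Definition sq_ends (e : sq_edge) : sq_vert * sq_vert :=
  match e with
  | inl (q, i) => (inl (q, i), inl (q, ordS i))
  | inr p => (pathv (tag p) (tagged p), pathv (tag p) (tagged p).+1)
  end.

Definition one_edge (e : sq_edge) : bool := if e is inr _ then true else false.

Definition sq_x {R : realType} (e : sq_edge) : R :=
  match e with inl _ => 1 / 2 | inr _ => 1 end.

Definition good_ham (H : {set sq_edge}) : Prop :=
  [/\ hamiltonian_cycle sq_ends H,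
      (forall e, one_edge e -> e \in H) &
      (forall q : Q, exists i : 'I_4, forall j : 'I_4,
          (inl (q, j) \in H) = (j == i) || (j == ordS (ordS i)))].

Definition r_vec {R : realType} (alpha : R) (H : {set sq_edge}) (e : sq_edge) : R :=
  if one_edge e then 1 + alpha
  else if e \in H then 1 / 2 else 1 - alpha.

Definition G_ends (f : F) : Q * Q := ((e1 f).1, (e2 f).1).

End SquarePoint.

(* Fix a matching M_i from the decomposition witnessing P(G, alpha) and an
   orientation o.  Since M_i is a matching of G, at most one corner t of each half-square
   has its 1-edge in M_i; o declares one end of every 1-edge of M_i heavy.  The multigraph
   takes every path of 1-edges twice if its edge of G is in M_i and once otherwise, and
   every half-edge once, except that an unmatched half-square drops one of its two
   Hamiltonian half-edges (which one depends on o), a half-square whose matched corner t is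
   heavy drops the Hamiltonian half-edge away from t, and one whose matched corner t is
   light drops both half-edges at t.  As each corner is matched with weight alpha,
   averaging over i and o with weights lambda_i / 2 gives r^{alpha,x}.
   Each of these multigraphs is 2-edge-connected: the kept half-edges of a half-square
   join all its non-light corners, a light corner hangs on its doubled path of 1-edges,
   and the remaining 1-paths realise G - M_i, which is 2-vertex-connected; hence no
   nontrivial cut is crossed by fewer than two copies of edges. *)

From mathcomp Require Import all_boot all_order all_algebra.
From mathcomp Require Import reals zify ring.

Import Order.TTheory GRing.Theory Num.Theory.
Local Open Scope ring_scope.

Ltac case_I4 t := let lt4 := fresh in case: t => [[|[|[|[|?]]]] lt4] //.

Lemma I4_orbit (r a : 'I_4) :
  [|| a == r, a == ordS r, a == ordS (ordS r) | a == ordS (ordS (ordS r))].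
Proof. by case_I4 r; case_I4 a. Qed.

Lemma I4_period (r : 'I_4) : ordS (ordS (ordS (ordS r))) = r.
Proof. by apply/val_inj; case_I4 r. Qed.

Lemma I4_ordS_neq (r : 'I_4) :
  [/\ ordS r != r, ordS (ordS r) != r & ordS (ordS (ordS r)) != r].
Proof. by case_I4 r. Qed.

Lemma cycle4_eq_but_edge {T : Type} {f : 'I_4 -> T} {r : 'I_4} :
  (forall j, j != r -> f j = f (ordS j)) -> forall a b, f a = f b.
Proof.
move=> fS; have [n1 n2 n3] := I4_ordS_neq r.
have e1 := fS _ n1; have e2 := fS _ n2; have e3 := fS _ n3; rewrite I4_period in e3.
suff fr a : f a = f r by move=> a b; rewrite !fr.
by case/or4P: (I4_orbit r a) => /eqP->; rewrite ?e1 ?e2 ?e3.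
Qed.

Lemma cycle4_eq_off_vertex {T : Type} {f : 'I_4 -> T} {t : 'I_4} :
  (forall j, j != t -> ordS j != t -> f j = f (ordS j)) ->
  forall a b, a != t -> b != t -> f a = f b.
Proof.
move=> fS; have [n1 n2 n3] := I4_ordS_neq t.
have e1 := fS _ n1 n2; have e2 := fS _ n2 n3.
suff ft a : a != t -> f a = f (ordS t) by move=> a b /ft-> /ft->.
by case/or4P: (I4_orbit t a) => /eqP->; rewrite ?eqxx // => _; rewrite -?e2 -?e1.
Qed.

Section Multigraphs.
Context {V E : finType} {ends : E -> V * V}.

Lemma connected_in_const {T : Type} {Es : {set E}} {W : {set V}} (h : V -> T) :
  connected_in ends Es W ->
  (forall e, e \in Es -> (ends e).1 \in W -> (ends e).2 \in W ->
     h (ends e).1 = h (ends e).2) ->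
  forall u v, u \in W -> v \in W -> h u = h v.
Proof.
move=> conW hE u v uW vW; have /connectP [p] := conW u v uW vW.
elim: p u uW => [|w p IHp] u uW /=; first by move=> _ ->.
case/andP=> /and3P [_ wW /existsP [e /andP [eEs eE]]] pP vE.
rewrite -(IHp w wW pP vE).
by case/orP: eE => /andP [/eqP e1 /eqP e2]; rewrite -e1 -e2 ?hE // ?e1 ?e2.
Qed.

Lemma two_vertex_connected_const {T : Type} {Es : {set E}} (h : V -> T) {e0 : E} :
  two_vertex_connected ends Es -> (ends e0).1 != (ends e0).2 ->
  (forall e, e \in Es -> e != e0 -> h (ends e).1 = h (ends e).2) ->
  forall u v, h u = h v.
Proof.
case=> V_gt2 [_ conD] e0_proper hE.
set a := (ends e0).1 in e0_proper *; set b := (ends e0).2 in e0_proper *.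
have hDa u v : u \in setT :\ a -> v \in setT :\ a -> h u = h v.
  apply: (connected_in_const h (conD a)) => e eEs ea _; apply: hE => //.
  by apply: contraTneq ea => ->; rewrite !inE eqxx.
have hDb u v : u \in setT :\ b -> v \in setT :\ b -> h u = h v.
  apply: (connected_in_const h (conD b)) => e eEs _ eb; apply: hE => //.
  by apply: contraTneq eb => ->; rewrite !inE eqxx.
have /subsetPn [w _ wab] : ~~ ([set: V] \subset [set a; b]).
  by apply/negP => /subset_leq_card; rewrite cardsT cards2 e0_proper leqNgt V_gt2.
move: wab; rewrite !inE negb_or => /andP [wa wb].
suff hw u : h u = h w by move=> u v; rewrite !hw.
have [->|ua] := eqVneq u a; last by apply: hDa; rewrite !inE ?ua ?wa.
by apply: hDb; rewrite !inE ?wb // andbT; apply: contraNneq e0_proper => ->.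
Qed.

Lemma two_ecm_of_cuts {y : E -> nat} :
  (forall S : {set V},
     (forall e, (0 < y e)%N -> ((ends e).1 \in S) = ((ends e).2 \in S)) ->
     S = set0 \/ S = setT) ->
  (forall (S : {set V}) (e0 : E), y e0 = 1%N ->
     (forall e, e != e0 -> (0 < y e)%N -> ((ends e).1 \in S) = ((ends e).2 \in S)) ->
     ((ends e0).1 \in S) = ((ends e0).2 \in S)) ->
  two_ecm ends y.
Proof.
move=> closed_trivial bridgeless S S0 ST; rewrite leqNgt; apply/negP => small.
have uncut e : e \notin delta ends S -> ((ends e).1 \in S) = ((ends e).2 \in S).
  by rewrite inE negbK => /eqP.
have y_le e : e \in delta ends S -> (y e <= \sum_(e in delta ends S) y e)%N.
  by move=> eS; rewrite (bigD1 e) //= leq_addr.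
case: (pickP [pred e in delta ends S | (0 < y e)%N]) => [e0 /andP [e0S ye0] | none].
  have y1 : y e0 = 1%N by have := y_le e0 e0S; lia.
  suff : ((ends e0).1 \in S) = ((ends e0).2 \in S).
    by move: e0S; rewrite inE => /[swap] ->; rewrite eqxx.
  apply: (bridgeless S e0 y1) => e ne0 ye; apply: uncut; apply/negP => eS.
  have : (y e + y e0 <= \sum_(e in delta ends S) y e)%N.
    by rewrite (bigD1 e) //= leq_add2l (bigD1 e0) /= ?leq_addr // e0S eq_sym.
  lia.
have [SE|SE] : S = set0 \/ S = setT.
  apply: closed_trivial => e ye; apply: uncut.
  by move: (none e); rewrite /= ye andbT => ->.
- by rewrite SE eqxx in S0.
- by rewrite SE eqxx in ST.
Qed.

Lemma convex_comb_2ecm_fin {R : realType} {I : finType} (w : I -> R) (y : I -> E -> nat)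
    (r : E -> R) :
  (forall i, 0 <= w i) -> \sum_i w i = 1 -> (forall i, two_ecm ends (y i)) ->
  (forall e, r e = \sum_i w i * (y i e)%:R) -> convex_comb_2ecm ends r.
Proof.
move=> w_ge0 w_sum1 y_2ecm rE.
have sum_enum (G : I -> R) : \sum_i G i = \sum_(j < #|I|) G (enum_val j).
  by rewrite (reindex (fun j : 'I_#|I| => enum_val j)) //; apply: onW_bij; exact: enum_val_bij.
exists #|I|, (fun j => w (enum_val j)), (fun j => y (enum_val j)).
split=> [j|]; first exact: w_ge0.
split; first by rewrite -sum_enum.
by split=> [j|e]; [exact: y_2ecm | rewrite rE sum_enum].
Qed.

Lemma P_prop_loopless {R : realType} {alpha : R} : 0 < alpha -> P_prop ends alpha ->
  forall e, (ends e).1 != (ends e).2.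
Proof.
move=> alpha_gt0 [k [lam [M [_ [_ [M_ok alphaE]]]]]] e.
have [i eMi | notin] := pickP (fun i => e \in M i); first exact: (M_ok i).1.1 e eMi.
by move: alpha_gt0; rewrite (alphaE e) big1 ?ltxx // => i _; rewrite notin mulr0.
Qed.

End Multigraphs.

Lemma option_indicator (R : comPzRingType) (T : finType) (g : option T -> R) (x : option T) :
  g x = g None * (1 - \sum_t (x == Some t)%:R) + \sum_t g (Some t) * (x == Some t)%:R.
Proof.
case: x => [t0|]; last by rewrite !big1 ?subr0 ?mulr1 ?addr0 // => t _; rewrite /= ?mulr0.
have pick1 (F : T -> R) : \sum_t F t * (Some t0 == Some t)%:R = F t0.
  rewrite (bigD1 t0) //= eqxx mulr1 big1 ?addr0 // => t.
  by rewrite (inj_eq Some_inj) eq_sym => /negbTE->; rewrite mulr0.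
have := pick1 (fun=> 1); under eq_bigr do rewrite mul1r.
by move=> ->; rewrite pick1 subrr mulr0 add0r.
Qed.

Lemma sum_option_weights {R : comPzRingType} {T : finType} {k : nat} {lam : 'I_k -> R}
    {x : 'I_k -> option T} (g : option T -> R) (a : R) :
  \sum_i lam i = 1 -> (forall t, \sum_i lam i * (x i == Some t)%:R = a) ->
  \sum_i lam i * g (x i) = g None * (1 - #|T|%:R * a) + a * \sum_t g (Some t).
Proof.
move=> lam1 lamE; set c := fun i t => (x i == Some t)%:R : R.
have lamS : \sum_i lam i * \sum_t c i t = #|T|%:R * a.
  under eq_bigr do rewrite mulr_sumr.
  by rewrite exchange_big (eq_bigr _ (fun t _ => lamE t)) sumr_const mulr_natl.
have lamT : \sum_i lam i * \sum_t g (Some t) * c i t = a * \sum_t g (Some t).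
  under eq_bigr do rewrite mulr_sumr.
  rewrite exchange_big mulr_sumr; apply: eq_bigr => t _.
  by rewrite -(lamE t) mulr_suml; apply: eq_bigr => i _; ring.
rewrite (eq_bigr (fun i => g None * lam i - g None * (lam i * \sum_t c i t)
                           + lam i * \sum_t g (Some t) * c i t)) => [|i _]; last first.
  by rewrite [g (x i)]option_indicator; ring.
by rewrite big_split sumrB /= -!mulr_sumr lam1 lamS lamT; ring.
Qed.

(* Half-edge j of a half-square joins corners j and j + 1; of the half-edges b and b + 2,
   the one not at corner t. *)
Definition ham_edge_off (b t : 'I_4) : 'I_4 :=
  if (t == b) || (t == ordS b) then ordS (ordS b) else b.

Lemma ham_edge_off_avoids (b t : 'I_4) :
  (ham_edge_off b t != t) && (ordS (ham_edge_off b t) != t).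
Proof. by case_I4 b; case_I4 t. Qed.

Definition ham_copies (b : 'I_4) (c : option 'I_4) (j : 'I_4) : nat :=
  match c with
  | None => (j != b) + (j != ordS (ordS b))
  | Some t => (j != ham_edge_off b t) + ~~ ((j == t) || (ordS j == t))
  end%N.

Lemma ham_copies_None b j :
  ham_copies b None j = (if (j == b) || (j == ordS (ordS b)) then 1 else 2)%N.
Proof. by case_I4 b; case_I4 j. Qed.

Lemma sum_ham_copies_Some b j :
  (\sum_t ham_copies b (Some t) j = if (j == b) || (j == ordS (ordS b)) then 4 else 6)%N.
Proof. by rewrite !big_ord_recr big_ord0 /=; case_I4 b; case_I4 j. Qed.

Section SquarePointMultigraph.
Context {Q F : finType} {e1 e2 : F -> Q * 'I_4} {lenm1 : F -> nat}.

Definition bc_corner (p : F * bool) : Q * 'I_4 := if p.2 then e1 p.1 else e2 p.1.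

Variable psi : Q * 'I_4 -> F * bool.
Hypotheses (cornerK : cancel bc_corner psi) (psiK : cancel psi bc_corner).
Hypothesis G_loopless : forall f, (e1 f).1 != (e2 f).1.

Local Notation pathv := (pathv e1 e2 lenm1).
Local Notation sq_ends := (@sq_ends Q F e1 e2 lenm1).

Definition path_edge f (k : 'I_(lenm1 f).+1) : sq_edge Q lenm1 :=
  inr (Tagged (fun g => 'I_(lenm1 g).+1) k).

Definition mate (v : Q * 'I_4) : Q * 'I_4 := bc_corner ((psi v).1, ~~ (psi v).2).

Lemma pathv0 f : pathv f 0 = inl (e1 f). Proof. by []. Qed.

Lemma pathv_last f : pathv f (lenm1 f).+1 = inl (e2 f).
Proof. by rewrite /pathv /= insubF // ltnn. Qed.

Lemma pathv_inner f (j : 'I_(lenm1 f)) :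
  pathv f j.+1 = inr (Tagged (fun g => 'I_(lenm1 g)) j).
Proof. by rewrite /pathv /= valK. Qed.

Lemma path_edge_tag f g k k' : path_edge f k = path_edge g k' -> f = g.
Proof. by move=> /(congr1 (fun e : sq_edge Q lenm1 => if e is inr p then tag p else f)). Qed.

Lemma path_edge_val f k k' : path_edge f k = path_edge f k' -> k = k' :> nat.
Proof.
by move=> /(congr1 (fun e : sq_edge Q lenm1 => if e is inr p then val (tagged p) else 0%N)).
Qed.

Lemma psi_e1 f : psi (e1 f) = (f, true). Proof. exact: (cornerK (f, true)). Qed.
Lemma psi_e2 f : psi (e2 f) = (f, false). Proof. exact: (cornerK (f, false)). Qed.
Lemma psi_mate v : psi (mate v) = ((psi v).1, ~~ (psi v).2). Proof. exact: cornerK. Qed.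

Lemma mate_neq_square v : (mate v).1 != v.1.
Proof.
have := psiK v; rewrite /mate /bc_corner; case: (psi v) => f [] /= <-.
  by rewrite eq_sym G_loopless.
exact: G_loopless.
Qed.

Lemma corner_incident v : incident (G_ends e1 e2) (psi v).1 v.1.
Proof.
by rewrite -{2}[v]psiK /bc_corner /incident; case: (psi v) => f [] /=; rewrite eqxx ?orbT.
Qed.

Section MatchingMultigraph.
Variables (M : {set F}) (o : bool) (ham : Q -> 'I_4).
Hypothesis M_matching : matching (G_ends e1 e2) M.

Definition matched v := (psi v).1 \in M.
Definition heavy v := (psi v).2 == o.
Definition light v := matched v && ~~ heavy v.
Definition matched_corner q : option 'I_4 := [pick t | matched (q, t)].
Definition free_corner q : 'I_4 := if matched_corner q is Some t then ordS t else ord0.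

Definition dropped q j :=
  match matched_corner q with
  | None => j == (if o then ham q else ordS (ordS (ham q)))
  | Some t => if heavy (q, t) then j == ham_edge_off (ham q) t else (j == t) || (ordS j == t)
  end.

Definition mgraph (e : sq_edge Q lenm1) : nat :=
  match e with
  | inl (q, j) => ~~ dropped q j
  | inr p => if tag p \in M then 2 else 1
  end.

Lemma matched_mate v : matched (mate v) = matched v.
Proof. by rewrite /matched psi_mate. Qed.

Lemma light_mate {v} : light v -> ~~ light (mate v).
Proof. by rewrite /light /heavy psi_mate /=; case: (psi v).2; case: o; rewrite ?andbF. Qed.

Lemma matched_corner_uniq {q t t'} : matched (q, t) -> matched (q, t') -> t = t'.
Proof.
rewrite /matched => mt mt'.
have [ff'|ff'] := eqVneq (psi (q, t)).1 (psi (q, t')).1; last first.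
  by have := M_matching.2 _ _ q mt mt' ff' (corner_incident _); rewrite corner_incident.
have [ss'|ss'] := eqVneq (psi (q, t)).2 (psi (q, t')).2.
  have /(can_inj psiK) [] // : psi (q, t) = psi (q, t').
  by rewrite [psi (q, t)]surjective_pairing ff' ss' -surjective_pairing.
have /(can_inj psiK) mE : psi (mate (q, t)) = psi (q, t').
  move: ss'; rewrite psi_mate ff'; case: (psi (q, t')) => f' s' /=.
  by case: (psi (q, t)).2; case: s'.
by have := mate_neq_square (q, t); rewrite mE eqxx.
Qed.

Lemma matched_cornerP q t : (matched_corner q == Some t) = matched (q, t).
Proof.
rewrite /matched_corner; case: pickP => [t' mt'|unm] /=; last by rewrite unm.
apply/eqP/idP => [[<-] //|mt]; by rewrite (matched_corner_uniq mt' mt).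
Qed.

Hypothesis M_2vc : two_vertex_connected (G_ends e1 e2) (~: M).

Section Cuts.
Variable S : {set sq_vert Q lenm1}.

Definition uncut e := (0 < mgraph e)%N -> ((sq_ends e).1 \in S) = ((sq_ends e).2 \in S).
Definition square_side q := inl (q, free_corner q) \in S.

Lemma square_sideE q a : (forall j, uncut (inl (q, j))) -> ~~ light (q, a) ->
  (inl (q, a) \in S) = square_side q.
Proof.
move=> uq na; pose f j := inl (q, j) \in S.
have step j : ~~ dropped q j -> f j = f (ordS j) by move=> nd; apply: uq; rewrite /= lt0b.
rewrite /square_side /free_corner; move: step na; rewrite /dropped /light.
case Eq: (matched_corner q) => [t|] step na; last exact: (cycle4_eq_but_edge step).
have mt : matched (q, t) by rewrite -matched_cornerP Eq.
case ht: (heavy (q, t)) in step; first exact: (cycle4_eq_but_edge step).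
apply: (cycle4_eq_off_vertex (f := f) (t := t)).
- by move=> j jt jSt; apply: step; rewrite negb_or jt.
- by apply: contraNneq na => ->; rewrite mt ht.
- by case: (I4_ordS_neq t).
Qed.

Lemma square_side_unmatched v : (forall j, uncut (inl (v.1, j))) -> ~~ matched v ->
  (inl v \in S) = square_side v.1.
Proof. by case: v => q a uq ma; apply: square_sideE => //; rewrite /light (negbTE ma). Qed.

Lemma path_edge_side {f k} : uncut (path_edge f k) -> (pathv f k \in S) = (pathv f k.+1 \in S).
Proof. by apply; rewrite /=; case: ifP. Qed.

Lemma path_walk f m n : (m <= n <= (lenm1 f).+1)%N ->
  (forall k : 'I_(lenm1 f).+1, (m <= k < n)%N -> uncut (path_edge f k)) ->
  (pathv f m \in S) = (pathv f n \in S).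
Proof.
elim: n => [|n IHn] /andP [mn nlt] uk; first by move: mn; rewrite leqn0 => /eqP->.
move: mn; rewrite leq_eqVlt => /orP [/eqP-> //|]; rewrite ltnS => mn.
have -> : (pathv f m \in S) = (pathv f n \in S).
  by apply: IHn => [|k /andP [mk kn]]; [rewrite mn ltnW | apply: uk; rewrite mk ltnS ltnW].
by apply: (path_edge_side (uk (Ordinal nlt) _)); rewrite /= mn ltnSn.
Qed.

Lemma path_ends_side {f} : (forall k, uncut (path_edge f k)) ->
  (inl (e1 f) \in S) = (inl (e2 f) \in S).
Proof.
by move=> uf; rewrite -pathv0 -pathv_last; apply: path_walk => [|k _]; rewrite ?leqnn.
Qed.

Lemma mate_side v : (forall k, uncut (path_edge (psi v).1 k)) ->
  (inl v \in S) = (inl (mate v) \in S).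
Proof.
rewrite /mate; have := psiK v.
by case: (psi v) => f [] <- uf; rewrite /bc_corner /= (path_ends_side uf).
Qed.

Lemma square_side_edge g : g \notin M -> (forall k, uncut (path_edge g k)) ->
  (forall j, uncut (inl ((e1 g).1, j))) -> (forall j, uncut (inl ((e2 g).1, j))) ->
  square_side (e1 g).1 = square_side (e2 g).1.
Proof.
move=> gM ug u1 u2.
rewrite -square_side_unmatched ?(path_ends_side ug) ?square_side_unmatched //;
  by rewrite /matched ?psi_e1 ?psi_e2.
Qed.

Lemma corner_side v : (forall e, uncut e) ->
  (inl v \in S) = square_side v.1 \/ (inl v \in S) = square_side (mate v).1.
Proof.
move=> uc; have uq q j : uncut (inl (q, j)) by apply: uc.
have [lv|nlv] := boolP (light v); last first.
  by left; case: v nlv => q a nla; apply: square_sideE.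
right; rewrite mate_side => [|k]; last exact: uc.
by case: (mate v) (light_mate lv) => q a nla; apply: square_sideE.
Qed.

Lemma closed_cut_trivial : (forall e, uncut e) -> S = set0 \/ S = setT.
Proof.
move=> uc.
have side_const u w : square_side u = square_side w.
  apply: (connected_in_const square_side M_2vc.2.1) => // g.
  by rewrite inE => gM _ _; apply: square_side_edge => // *; apply: uc.
have vertex_side x : exists q, (x \in S) = square_side q.
  case: x => [v | [f j]].
    by case: (corner_side v uc) => ->; [exists v.1 | exists (mate v).1].
  exists (e1 f).1; rewrite -pathv_inner -(path_walk f 0) => [||k _]; last exact: uc.
  - by have [->|->] := corner_side (e1 f) uc; apply: side_const.
  - by rewrite /= ltnW // ltnS.
have same x x' : (x \in S) = (x' \in S).
  by have [q ->] := vertex_side x; have [q' ->] := vertex_side x'; apply: side_const.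
have [-> | [x0 x0S]] := set_0Vmem S; [by left | right].
by apply/setP => x; rewrite inE (same x x0).
Qed.

Lemma uncut_path_edge f0 k0 : f0 \notin M ->
  (forall e, e != path_edge f0 k0 -> uncut e) ->
  ((sq_ends (path_edge f0 k0)).1 \in S) = ((sq_ends (path_edge f0 k0)).2 \in S).
Proof.
move=> f0M uc; have uq q j : uncut (inl (q, j)) by apply: uc.
have side_const u w : square_side u = square_side w.
  apply: (two_vertex_connected_const square_side (e0 := f0) M_2vc (G_loopless f0)) => g.
  rewrite inE => gM gf0; apply: square_side_edge => // k.
  by apply: uc; apply: contra_neq gf0 => /path_edge_tag.
have walk m n : (m <= n <= (lenm1 f0).+1)%N -> (forall k : 'I_(lenm1 f0).+1,
    (m <= k < n)%N -> k != k0 :> nat) -> (pathv f0 m \in S) = (pathv f0 n \in S).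
  move=> mn k_ne; apply: path_walk => // k kmn; apply: uc.
  by apply: contra_neq (k_ne k kmn) => /path_edge_val.
have e1_side : (inl (e1 f0) \in S) = square_side (e1 f0).1.
  by rewrite square_side_unmatched // /matched psi_e1.
have e2_side : (inl (e2 f0) \in S) = square_side (e2 f0).1.
  by rewrite square_side_unmatched // /matched psi_e2.
rewrite /= -(walk 0) => [||k /andP [_ kk0]]; last by rewrite ltn_eqF.
- rewrite (walk k0.+1 (lenm1 f0).+1) => [||k /andP [k0k _]]; last by rewrite gtn_eqF.
  + by rewrite pathv0 pathv_last e1_side e2_side.
  + by rewrite ltn_ord leqnn.
- by rewrite leq0n (ltnW (ltn_ord k0)).
Qed.

Lemma uncut_square_edge q0 j0 : ~~ dropped q0 j0 ->
  (forall e, e != inl (q0, j0) -> uncut e) ->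
  (inl (q0, j0) \in S) = (inl (q0, ordS j0) \in S).
Proof.
move=> kept uc.
have other_sq q j : q != q0 -> uncut (inl (q, j)).
  by move=> qq0; apply: uc; apply: contra_neq qq0 => -[].
have side_const u w : u != q0 -> w != q0 -> square_side u = square_side w.
  move=> uq0 wq0; apply: (connected_in_const square_side (M_2vc.2.2 q0));
    rewrite ?inE ?uq0 ?wq0 // => g gM.
  rewrite !inE !andbT => g1 g2.
  by apply: square_side_edge => [|k|j|j]; [rewrite -in_setC | apply: uc | exact: other_sq ..].
have far_side u : ~~ matched (q0, u) ->
    exists2 q, q != q0 & (inl (q0, u) \in S) = square_side q.
  move=> mu; exists (mate (q0, u)).1; first exact: mate_neq_square.
  rewrite mate_side => [|k]; last exact: uc.
  apply: square_side_unmatched; last by rewrite matched_mate.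
  by move=> j; apply: other_sq; apply: mate_neq_square.
have end_side w : (w == j0) || (w == ordS j0) ->
    exists2 q, q != q0 & (inl (q0, w) \in S) = square_side q.
  move=> wj0; have [mw|/far_side //] := boolP (matched (q0, w)).
  have Ew : matched_corner q0 = Some w by apply/eqP; rewrite matched_cornerP.
  have nbr_free u : u != w -> ~~ matched (q0, u).
    by move=> uw; apply: contra uw => mu; rewrite (matched_corner_uniq mu mw).
  move: kept; rewrite /dropped Ew; case: ifP => [hw _ | _]; last first.
    by case/orP: wj0 => /eqP->; rewrite eqxx ?orbT.
  (* w is heavy, as a light corner keeps no half-edge; so a half-edge at w other than j0
     is kept and leads to an unmatched neighbour. *)
  have step j : j != j0 -> j != ham_edge_off (ham q0) w ->
      (inl (q0, j) \in S) = (inl (q0, ordS j) \in S).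
    move=> jj0 jd; apply: (uc (inl (q0, j))); first by apply: contra_neq jj0 => -[].
    by rewrite /= lt0b /dropped Ew hw.
  have [n1 _ n3] := I4_ordS_neq w.
  have /andP [d1 d2] := ham_edge_off_avoids (ham q0) w.
  case/orP: wj0 => /eqP wE.
  - have pred_side : (inl (q0, ordS (ordS (ordS w))) \in S) = (inl (q0, w) \in S).
      have := step (ordS (ordS (ordS w))); rewrite I4_period -wE; apply=> //.
      by apply: contra_neq d2 => <-; rewrite I4_period.
    by have [q qq0 E] := far_side _ (nbr_free _ n3); exists q; rewrite // -pred_side.
  - have next_side : (inl (q0, w) \in S) = (inl (q0, ordS w) \in S).
      apply: step; last by rewrite eq_sym.
      by rewrite wE; case: (I4_ordS_neq j0).
    by have [q qq0 E] := far_side _ (nbr_free _ n1); exists q; rewrite // next_side.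
have /end_side [q1 q1q0 ->] : (j0 == j0) || (j0 == ordS j0) by rewrite eqxx.
have /end_side [q2 q2q0 ->] : (ordS j0 == j0) || (ordS j0 == ordS j0) by rewrite eqxx orbT.
exact: side_const.
Qed.

End Cuts.

Lemma mgraph_two_ecm : two_ecm sq_ends mgraph.
Proof.
apply: two_ecm_of_cuts => [S | S [[q j] | [f k]] /= y1 uc].
- exact: closed_cut_trivial.
- by apply: uncut_square_edge uc; move: y1; case: (dropped q j).
- by apply: (uncut_path_edge S f k) uc; move: y1; case: ifP.
Qed.

End MatchingMultigraph.

Lemma mgraph_orientations_sum M ham q j :
  (mgraph M true ham (inl (q, j)) + mgraph M false ham (inl (q, j))
   = ham_copies (ham q) (matched_corner M q) j)%N.
Proof.
rewrite /mgraph /dropped /heavy; case: (matched_corner M q) => [t|] //=.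
by case: (psi (q, t)).2; rewrite //= addnC.
Qed.

Lemma r_vec_mean {R : realType} {k : nat} {lam : 'I_k -> R} {Ms : 'I_k -> {set F}}
    {ham : Q -> 'I_4} {alpha : R} {H : {set sq_edge Q lenm1}} :
  (forall i, matching (G_ends e1 e2) (Ms i)) -> \sum_i lam i = 1 ->
  (forall f, alpha = \sum_i lam i * (f \in Ms i)%:R) ->
  (forall q j, (inl (q, j) \in H) = (j == ham q) || (j == ordS (ordS (ham q)))) ->
  forall e, r_vec alpha H e
    = \sum_i lam i * ((mgraph (Ms i) true ham e + mgraph (Ms i) false ham e)%N%:R / 2).
Proof.
move=> Ms_match lam1 alphaE hamE [[q j] | p]; last first.
  rewrite /r_vec /= (alphaE (tag p)) -{1}lam1 -big_split /=.
  by apply: eq_bigr => i _; case: (tag p \in Ms i) => /=; field.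
under eq_bigr do rewrite mgraph_orientations_sum.
rewrite (sum_option_weights (fun c => (ham_copies (ham q) c j)%:R / 2) alpha) //; last first.
  move=> t; rewrite (alphaE (psi (q, t)).1); apply: eq_bigr => i _.
  by rewrite (matched_cornerP _ (Ms_match i)).
rewrite -mulr_suml -natr_sum sum_ham_copies_Some ham_copies_None card_ord /r_vec /= hamE.
by case: ifP => _; field.
Qed.

End SquarePointMultigraph.

Theorem lemma12 (R : realType) (Q F : finType) (e1 e2 : F -> Q * 'I_4)
    (lenm1 : F -> nat)
    (Hx : boyd_carr_point e1 e2 R)
    (H : {set sq_edge Q lenm1}) (HH : good_ham e1 e2 H)
    (alpha : R) (Halpha : 0 < alpha)
    (HP : P_prop (G_ends e1 e2) alpha) :
  convex_comb_2ecm (@sq_ends Q F e1 e2 lenm1) (r_vec alpha H).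
Proof.
have [[psi cornerK psiK] _ _] := Hx.
have [k [lam [Ms [lam_ge0 [lam1 [Ms_ok alphaE]]]]]] := HP.
have loopless := P_prop_loopless Halpha HP.
have [_ _ /fin_all_exists [ham hamE]] := HH.
have Ms_match i : matching (G_ends e1 e2) (Ms i) by case: (Ms_ok i).
apply: (convex_comb_2ecm_fin (fun p : 'I_k * bool => lam p.1 / 2)
                             (fun p => mgraph psi (Ms p.1) p.2 ham)).
- by move=> p; rewrite divr_ge0 ?lam_ge0.
- rewrite -(pair_bigA _ (fun i _ => lam i / 2)) -[RHS]lam1.
  by apply: eq_bigr => i _; rewrite big_bool /=; field.
- by move=> [i o]; case: (Ms_ok i); apply: mgraph_two_ecm.
- move=> e; rewrite (r_vec_mean psi cornerK psiK loopless Ms_match lam1 alphaE hamE).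
  rewrite -(pair_bigA _ (fun i o => lam i / 2 * (mgraph psi (Ms i) o ham e)%:R)).
  by apply: eq_bigr => i _; rewrite big_bool /= natrD; field.
Qed.
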